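(* Let $\mathbb{F}\in\{\mathbb{R},\mathbb{C}\}$, let $A$ be an $n\times m$ matrix over $\mathbb{F}$, and let $p,q\in[1,\infty]$. Suppose $v\in\mathbb{F}^m$, $v\ne0$, is a maximizer of $\|Ax\|_q/\|x\|_p$ over nonzero $x\in\mathbb{F}^m$ such that (i) all nonzero components of $v$ have the same absolute value, and (ii) all nonzero components of $Av$ have the same absolute value. If $1<p<\infty$, or $p=1$ and $v\in K_1$, or $p=\infty$ and $v\in K_{-1}$, then $v$ is an eigenvector of $A^*A$.
   Context: $\|x\|_p$ is the Hölder $\ell_p$ norm. $A^*$ is the conjugate transpose. $K_1\subset\mathbb{F}^m$ is the set of vectors all of whose components have equal absolute values; $K_{-1}\subset\mathbb{F}^m$ is the set of vectors with at most one nonzero component. *)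

From HB Require Import structures.
From mathcomp Require Import all_boot all_order all_algebra.
From mathcomp Require Import all_classical all_reals ereal exp.
From mathcomp Require Import complex.
Set Implicit Arguments. Unset Strict Implicit. Unset Printing Implicit Defensive.
Import Order.TTheory GRing.Theory Num.Theory.
Local Open Scope ring_scope.

Definition lp_of (R : realType) (p : \bar R) (m : nat) (a : 'I_m -> R) : R :=
  match p with
  | EFin r => (\sum_(i < m) a i `^ r) `^ r^-1
  | _ => \big[Num.max/0]_(i < m) a i
  end.

(* The field F is either R (nrm = |.|, conj = id) or R[i] (nrm = complex
   modulus, conj = complex conjugation). Vectors of F^m are column vectors. *)
Definition lpnorm (R : realType) (F : nzRingType) (nrm : F -> R)
  (p : \bar R) (m : nat) (x : 'cV[F]_m) : R :=
  lp_of p (fun i => nrm (x i ord0)).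

Definition adjmx (F : nzRingType) (conj : F -> F) (n m : nat)
  (A : 'M[F]_(n, m)) : 'M[F]_(m, n) := (map_mx conj A)^T.

Definition is_maximizer (R : realType) (F : nzRingType) (nrm : F -> R)
  (p q : \bar R) (n m : nat) (A : 'M[F]_(n, m)) (v : 'cV[F]_m) : Prop :=
  v != 0 /\
  forall x : 'cV[F]_m, x != 0 ->
    lpnorm nrm q (A *m x) / lpnorm nrm p x <= lpnorm nrm q (A *m v) / lpnorm nrm p v.

Definition nonzero_equal_abs (R : realType) (F : nzRingType) (nrm : F -> R)
  (k : nat) (x : 'cV[F]_k) : Prop :=
  forall i j : 'I_k, x i ord0 != 0 -> x j ord0 != 0 ->
    nrm (x i ord0) = nrm (x j ord0).

Definition inK1 (R : realType) (F : nzRingType) (nrm : F -> R)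
  (k : nat) (x : 'cV[F]_k) : Prop :=
  forall i j : 'I_k, nrm (x i ord0) = nrm (x j ord0).

Definition inKm1 (F : nzRingType) (k : nat) (x : 'cV[F]_k) : Prop :=
  forall i j : 'I_k, x i ord0 != 0 -> x j ord0 != 0 -> i = j.

Definition eigenvector (F : nzRingType) (k : nat) (M : 'M[F]_k)
  (v : 'cV[F]_k) : Prop :=
  v != 0 /\ exists lambda : F, M *m v = lambda *: v.

Definition cmod (R : realType) (z : R[i]) : R := Normc.normc z.

(* Let w = A^* A v and L = ||Av||_2^2 / ||v||_p.  Since the nonzero entries of Av
   share one modulus, Hölder's inequality gives Re <y, Av> ||Av||_q <= ||y||_q ||Av||_2^2
   for every y, with equality at y = Av.  Taking y = Ax and using the maximality of v,
   Re <x, w> = Re <Ax, Av> <= L ||x||_p for all x, with equality at x = v: w is a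
   subgradient of L ||.||_p at v.  Perturbing v one coordinate at a time pins w down.
   For 1 < p < oo, or p = 1 when no coordinate of v vanishes, ||.||_p is differentiable
   at v and w_j = L ||v||_p^(1-p) |v_j|^(p-2) v_j, a common real multiple of v_j because
   the |v_j| agree.  For p = oo and v = a e_k, a nonzero w_j with j <> k would let
   Re <x, w> grow while ||x||_oo stays equal to |a|. *)

From HB Require Import structures.
From mathcomp Require Import all_boot all_order all_algebra.
From mathcomp Require Import all_classical all_reals ereal exp.
From mathcomp Require Import complex.
From mathcomp Require Import ring lra.
Import Order.TTheory GRing.Theory Num.Theory.
Local Open Scope ring_scope.

Section PowRInequalities.
Context {R : realType}.
Implicit Types d r s t z S : R.

Lemma powR_ge_bernoulli z r : 0 <= z -> 1 <= r -> 1 + r * (z - 1) <= z `^ r.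
Proof.
move=> z0 r1; have [->|rn1] := eqVneq r 1; first by rewrite powRr1 // mul1r; lra.
have r1' : 1 < r by rewrite lt_neqAle eq_sym rn1.
have r0 : 0 < r by lra.
have q0 : 0 < r / (r - 1) by rewrite divr_gt0 //; lra.
have conj_rq : r^-1 + (r / (r - 1))^-1 = 1 by field; rewrite ?gt_eqF //; lra.
(* Young's inequality z * 1 <= z ^ r / r + 1 / q for the exponents r and q = r / (r - 1) *)
have := @conjugate_powR R z 1 r (r / (r - 1)) z0 ler01 r0 q0 conj_rq.
rewrite mulr1 powR1 -(ler_pM2l r0).
have -> : r * (z `^ r / r + 1 / (r / (r - 1))) = z `^ r + (r - 1) by field; rewrite ?gt_eqF //; lra.
lra.
Qed.

Lemma powR_le_bernoulli z r : 0 <= z -> 0 < r <= 1 -> z `^ r <= 1 + r * (z - 1).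
Proof.
move=> z0 /andP[r0 r1]; have [->|rn1] := eqVneq r 1.
  by rewrite powRr1 // mul1r; lra.
have r1' : r < 1 by rewrite lt_neqAle rn1.
have Vr0 : 0 < r^-1 by rewrite invr_gt0.
have V1r0 : 0 < (1 - r)^-1 by rewrite invr_gt0; lra.
have conj_exp : r^-1^-1 + (1 - r)^-1^-1 = 1 by rewrite !invrK subrKC.
have := @conjugate_powR R (z `^ r) 1 r^-1 (1 - r)^-1 (powR_ge0 _ _) ler01 Vr0 V1r0 conj_exp.
rewrite !invrK mulr1 powR1 -powRrM mulfV ?gt_eqF // powRr1 //; lra.
Qed.

Lemma powR_le_bernoulliV s r : 0 < s -> 1 <= r -> 0 < s - r * (s - 1) ->
  s `^ r <= s / (s - r * (s - 1)).
Proof.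
move=> s0 r1 d0.
have Vs0 : 0 < s^-1 by rewrite invr_gt0.
have := @powR_ge_bernoulli _ _ (ltW Vs0) r1.
have VsrK : s^-1 `^ r * s `^ r = 1 by rewrite -powRM ?mulVf ?gt_eqF ?powR1 // ltW.
set Y := s^-1 `^ r; set X := s `^ r => bern.
have X0 : 0 <= X by apply: powR_ge0.
have dY : s - r * (s - 1) <= s * Y.
  have -> : s - r * (s - 1) = s * (1 + r * (s^-1 - 1)) by field; rewrite gt_eqF.
  by rewrite ler_pM2l.
rewrite ler_pdivlMr //; apply: le_trans (ler_wpM2l X0 dY) _.
by rewrite mulrCA [X * Y]mulrC VsrK mulr1.
Qed.

Lemma powR_invr_le_tangent S d r : 0 < S -> 0 <= S + d -> 1 <= r ->
  (S + d) `^ r^-1 <= S `^ r^-1 * (1 + d / (r * S)).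
Proof.
move=> S0 Sd0 r1.
have -> : S + d = S * (1 + d / S) by field; rewrite gt_eqF.
have dS0 : 0 <= 1 + d / S.
  have -> : 1 + d / S = (S + d) / S by field; rewrite gt_eqF.
  by rewrite divr_ge0 // ltW.
rewrite powRM ?(ltW S0) // ler_pM2l ?powR_gt0 //.
have Vr : 0 < r^-1 <= 1 by rewrite invr_gt0 invf_le1 ?r1 ?andbT; lra.
apply: le_trans (powR_le_bernoulli _ _ dS0 Vr) _.
by rewrite invfM mulrCA mulrA; lra.
Qed.

Lemma ler0_mul_small D C t0 : 0 < t0 -> 0 <= C ->
  (forall t, 0 < t -> t <= t0 -> D <= t * C) -> D <= 0.
Proof.
move=> t00 C0 small; apply/ler_addgt0Pr => e e0; rewrite add0r.
pose t := Num.min t0 (e / (C + 1)).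
have et0 : 0 < e / (C + 1) by rewrite divr_gt0 //; lra.
have t0' : 0 < t by rewrite lt_min t00.
have tt0 : t <= t0 by rewrite ge_min lexx.
have := small t t0' tt0.
have : t * (C + 1) <= e by rewrite -ler_pdivlMr ?ge_min ?lexx ?orbT //; lra.
nra.
Qed.

Lemma powR_mean_le (I : finType) (T : pred I) (a : I -> R) s :
  1 <= s -> (forall i, 0 <= a i) -> (0 < #|T|)%N ->
  #|T|%:R * ((\sum_(i in T) a i) / #|T|%:R) `^ s <= \sum_(i in T) a i `^ s.
Proof.
move=> s1 a0 T0; set N : R := #|T|%:R; set S := \sum_(i in T) a i; set m := S / N.
have N0 : 0 < N by rewrite ltr0n.
have S0 : 0 <= S by rewrite sumr_ge0.
have [m0|m0] := eqVneq m 0.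
  rewrite m0 powR0 ?mulr0; last by rewrite gt_eqF //; lra.
  by rewrite sumr_ge0 // => i _; exact: powR_ge0.
have mpos : 0 < m by rewrite lt_neqAle eq_sym m0 divr_ge0 // ltW.
have -> : N * m `^ s = \sum_(i in T) m `^ s * (1 + s * (a i / m - 1)).
  rewrite -mulr_sumr big_split /= -mulr_sumr sumrB -mulr_suml !sumr_const -/S -/N.
  have SmN : S / m = N.
    by rewrite /m invf_div mulrCA divff ?mulr1 //; apply: contraNneq m0 => S0'; rewrite /m S0' mul0r.
  by rewrite SmN subrr mulr0 addr0 mulrC.
apply: ler_sum => i _.
have -> : a i `^ s = m `^ s * (a i / m) `^ s.
  by rewrite -powRM ?divr_ge0 ?(ltW mpos) // mulrC divfK ?gt_eqF.
by rewrite ler_pM2l ?powR_gt0 // powR_ge_bernoulli // divr_ge0 // ltW.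
Qed.

End PowRInequalities.

Section LpOf.
Context {R : realType} {m : nat}.
Implicit Types (p : \bar R) (a : 'I_m -> R).

Lemma lp_of_ge0 p a : (forall i, 0 <= a i) -> 0 <= lp_of p a.
Proof. by move=> a0; case: p => [r||] /=; rewrite ?powR_ge0 ?bigmax_ge_id. Qed.

Lemma lp_of_gt0 p a k : (1 <= p)%E -> (forall i, 0 <= a i) -> 0 < a k ->
  0 < lp_of p a.
Proof.
case: p => [r||] //= p1 a0 ak; last exact: lt_le_trans ak (le_bigmax _ _ _).
apply: powR_gt0; rewrite (bigD1 k) //=; apply: lt_le_trans (powR_gt0 r ak) _.
by rewrite lerDl sumr_ge0 // => i _; rewrite powR_ge0.
Qed.

Lemma lp_ofZ p c a : (1 <= p)%E -> 0 <= c -> (forall i, 0 <= a i) ->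
  lp_of p (fun i => c * a i) = c * lp_of p a.
Proof.
case: p => [r||] //= p1 c0 a0; last first.
  by rewrite (big_morph (fun x => c * x) (fun x y => maxr_pMr x y c0) (mulr0 c)).
rewrite lee_fin in p1.
have r0 : r != 0 by rewrite gt_eqF //; lra.
under eq_bigr => i _ do rewrite powRM //.
rewrite -mulr_sumr powRM ?powR_ge0 ?sumr_ge0 // => [|i _]; last exact: powR_ge0.
by rewrite -powRrM mulfV // powRr1.
Qed.

Lemma sum_mul_lp_of_indicator_le p (T : pred 'I_m) a :
  (1 <= p)%E -> (forall i, 0 <= a i) ->
  (\sum_(i in T) a i) * lp_of p (fun i => (i \in T)%:R) <= #|T|%:R * lp_of p a.
Proof.
move=> p1 a0; set S := \sum_(i in T) a i.
have S0 : 0 <= S by rewrite sumr_ge0.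
have [T0|Tpos] := posnP #|T|.
  by rewrite /S big_pred0 ?mul0r ?T0 ?mul0r // => i; rewrite (card0_eq T0).
case: p p1 => [r| |] p1; last by rewrite leeNy_eq in p1.
- rewrite lee_fin in p1.
  have r0 : r != 0 by rewrite gt_eqF //; lra.
  set N : R := #|T|%:R.
  have N0 : 0 < N by rewrite ltr0n.
  rewrite /lp_of.
  have -> : \sum_i (i \in T)%:R `^ r = N.
    rewrite /N -sumr_const [RHS]big_mkcond /=; apply: eq_bigr => i _.
    by case: (i \in T); rewrite ?powR1 ?powR0.
  have mean := @powR_mean_le _ _ T _ _ p1 a0 Tpos; rewrite -/S -/N in mean.
  have root_mean : N `^ r^-1 * (S / N) <= (\sum_i a i `^ r) `^ r^-1.
    have -> : N `^ r^-1 * (S / N) = (N * (S / N) `^ r) `^ r^-1.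
      by rewrite powRM ?powR_ge0 ?(ltW N0) // -powRrM mulfV // powRr1 // divr_ge0 // ltW.
    apply: ge0_ler_powR; rewrite ?nnegrE.
    + by rewrite invr_ge0; lra.
    + by rewrite mulr_ge0 ?powR_ge0 // ltW.
    + by rewrite sumr_ge0 // => i _; exact: powR_ge0.
    apply: le_trans mean _; rewrite [leRHS](bigID (mem T)) /= lerDl.
    by rewrite sumr_ge0 // => i _; exact: powR_ge0.
  have -> : S * N `^ r^-1 = N * (N `^ r^-1 * (S / N)) by field; rewrite gt_eqF.
  by rewrite ler_pM2l.
- have ind1 : lp_of +oo (fun i => (i \in T)%:R) <= 1 :> R.
    by apply: bigmax_le => // i _; case: (i \in T).
  apply: le_trans (ler_wpM2l S0 ind1) _.
  have -> : #|T|%:R * lp_of +oo a = \sum_(i in T) lp_of +oo a.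
    by rewrite sumr_const mulr_natl.
  by rewrite mulr1; apply: ler_sum => i _; exact: le_bigmax.
Qed.

End LpOf.

Section PowRSlopes.
Context {R : realType}.
Implicit Types a b k r t L S N : R.

(* For r > 1, t |-> (S + (t * b) ^ r) ^ (1 / r) has right derivative 0 at t = 0. *)
Lemma root_add_powR_slope_le0 r S L b rho : 1 < r -> 0 < S -> 0 <= L -> 0 <= b ->
  (forall t, 0 < t -> L * S `^ r^-1 + t * rho <= L * (S + (t * b) `^ r) `^ r^-1) ->
  rho <= 0.
Proof.
move=> r1 S0 L0 b0 H.
set P := S `^ r^-1; set C := L * P * b `^ r / (r * S).
have C0 : 0 <= C by rewrite divr_ge0 ?mulr_ge0 ?powR_ge0 //; nra.
have slope t : 0 < t -> rho <= C * t `^ (r - 1).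
  move=> t0; have tb0 : 0 <= S + (t * b) `^ r by rewrite addr_ge0 ?powR_ge0 // ltW.
  have := ler_wpM2l L0 (powR_invr_le_tangent _ _ _ S0 tb0 (ltW r1)).
  have -> : L * (P * (1 + (t * b) `^ r / (r * S))) = L * P + t * (C * t `^ (r - 1)).
    rewrite powRM ?(ltW t0) // -(mulr_powRB1 (ltW t0)) /C; last lra.
    by field; lra.
  move=> Htan; have Ht := H t t0; rewrite -/P in Ht; rewrite -(ler_pM2l t0); lra.
rewrite leNgt; apply/negP => rho0.
have r10 : r - 1 != 0 by rewrite subr_eq0 gt_eqF.
have C10 : 0 < C + 1 by lra.
set e := rho / (C + 1); have e0 : 0 < e by rewrite divr_gt0.
have := slope (e `^ (r - 1)^-1) (powR_gt0 _ e0).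
rewrite -powRrM mulVf // powRr1; last exact: ltW.
have : C * e < rho by rewrite /e mulrA ltr_pdivrMr //; nra.
lra.
Qed.

Lemma powR_le_first_order N a k r : 1 <= r -> 0 < a -> 0 <= N ->
  N ^+ 2 = a ^+ 2 * (1 + 2 * k) -> r * `|k| < 1 ->
  N `^ r <= a `^ r * (1 + r * k / (1 - (r - 1) * k)).
Proof.
move=> r1 a0 N0 N2 rk.
have /andP[kN kk] : - `|k| <= k <= `|k| by rewrite -ler_norml.
have k1 : 0 < 1 + k by nra.
have D0 : 0 < 1 - (r - 1) * k by nra.
have aK0 : 0 <= a * (1 + k) by rewrite mulr_ge0 ?ltW.
have NaK : N <= a * (1 + k).
  rewrite -(ler_pXn2r (_ : 0 < 2)%N) ?nnegrE // N2 exprMn ler_pM2l ?exprn_gt0 //.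
  have : 0 <= k ^+ 2 by apply: sqr_ge0.
  by rewrite sqrrD expr1n; lra.
apply: (le_trans (ge0_ler_powR (ltW (lt_le_trans ltr01 r1)) _ _ NaK)); rewrite ?nnegrE //.
rewrite powRM ?(ltW a0) ?(ltW k1) // ler_pM2l ?powR_gt0 //.
have -> : 1 + r * k / (1 - (r - 1) * k) = (1 + k) / ((1 + k) - r * ((1 + k) - 1)).
  by field; rewrite gt_eqF //; lra.
by apply: powR_le_bernoulliV => //; lra.
Qed.

End PowRSlopes.

Section NonzeroEntrySlope.
Context {R : realType}.
Variables (r a S L sg c2 : R).

(* If N t ^ 2 = a ^ 2 + 2 t sg + t ^ 2 c2, then mu * sg is the right derivative at
   t = 0 of L * (S - a ^ r + N t ^ r) ^ (1 / r), and N t ^ 2 = a ^ 2 * (1 + 2 * k t). *)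
Local Notation mu := (L * S `^ r^-1 * a `^ r / (S * a ^+ 2)).
Local Notation k t := (t * (sg + t * c2 / 2) / a ^+ 2).

Lemma rel_increment_le t : 0 < a -> 0 <= c2 -> 0 < t -> t <= 1 ->
  `|k t| <= t * ((`|sg| + c2) / a ^+ 2).
Proof.
move=> a0 c20 t0 t1; have a20 : 0 < a ^+ 2 by rewrite exprn_gt0.
have ka : k t * a ^+ 2 = t * sg + t ^+ 2 * c2 / 2 by field; rewrite gt_eqF.
have Ka : t * ((`|sg| + c2) / a ^+ 2) * a ^+ 2 = t * (`|sg| + c2) by field; rewrite gt_eqF.
have sgN : - `|sg| <= sg by rewrite lerNl -normrN ler_norm.
have := ler_norm sg; have : t ^+ 2 <= t by rewrite expr2 ger_pMr.
move=> t2 sgn; rewrite ler_norml; apply/andP; split; rewrite -(ler_pM2r a20).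
  by rewrite mulNr Ka ka; nra.
by rewrite Ka ka; nra.
Qed.

Lemma root_powR_increment_bound t rho N :
  1 <= r -> 0 < a -> a `^ r <= S -> 0 <= L -> 0 < t -> 0 <= N ->
  N ^+ 2 = a ^+ 2 + 2 * t * sg + t ^+ 2 * c2 -> r * `|k t| < 1 ->
  L * S `^ r^-1 + t * rho <= L * (S - a `^ r + N `^ r) `^ r^-1 ->
  rho * (1 - (r - 1) * k t) <= mu * (sg + t * c2 / 2).
Proof.
move=> r1 a0 aS L0 t0 N0 N2 rk Ht.
have r0 : 0 < r by lra.
have S0 : 0 < S by apply: lt_le_trans aS; exact: powR_gt0.
have /andP[kN kk] : - `|k t| <= k t <= `|k t| by rewrite -ler_norml.
have D0 : 0 < 1 - (r - 1) * k t by nra.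
have N2k : N ^+ 2 = a ^+ 2 * (1 + 2 * k t) by rewrite N2; field; rewrite gt_eqF ?exprn_gt0.
have Nr := powR_le_first_order _ _ _ _ r1 a0 N0 N2k rk.
have Sd0 : 0 <= S + (N `^ r - a `^ r) by have := powR_ge0 N r; lra.
have tan := ler_wpM2l L0 (powR_invr_le_tangent _ _ _ S0 Sd0 r1).
have LPrS0 : 0 <= L * S `^ r^-1 / (r * S) by rewrite divr_ge0 ?mulr_ge0 ?powR_ge0 // ltW.
have incr : N `^ r - a `^ r <= a `^ r * (r * k t / (1 - (r - 1) * k t)) by lra.
have := ler_wpM2l LPrS0 incr.
have -> : L * S `^ r^-1 / (r * S) * (a `^ r * (r * k t / (1 - (r - 1) * k t))) =
          t * (mu * (sg + t * c2 / 2) / (1 - (r - 1) * k t)).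
  have Dk : 2 * a ^+ 2 - (r - 1) * (t * (sg * 2 + t * c2)) = 2 * a ^+ 2 * (1 - (r - 1) * k t).
    by field; rewrite gt_eqF.
  have a20 : 0 < 2 * a ^+ 2 by rewrite mulr_gt0 ?exprn_gt0.
  by field; rewrite Dk !gt_eqF ?mulr_gt0.
move=> hinc.
have : t * rho <= t * (mu * (sg + t * c2 / 2) / (1 - (r - 1) * k t)).
  have e : L * (S `^ r^-1 * (1 + (N `^ r - a `^ r) / (r * S))) =
           L * S `^ r^-1 + L * S `^ r^-1 / (r * S) * (N `^ r - a `^ r) by ring.
  have e' : S - a `^ r + N `^ r = S + (N `^ r - a `^ r) by ring.
  by rewrite e' in Ht; rewrite e in tan; lra.
by rewrite ler_pM2l // ler_pdivlMr // mulrC.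
Qed.

Lemma root_powR_slope_le rho (N : R -> R) :
  1 <= r -> 0 < a -> a `^ r <= S -> 0 <= L -> 0 <= c2 ->
  (forall t, 0 < t -> 0 <= N t /\ N t ^+ 2 = a ^+ 2 + 2 * t * sg + t ^+ 2 * c2) ->
  (forall t, 0 < t -> L * S `^ r^-1 + t * rho <= L * (S - a `^ r + N t `^ r) `^ r^-1) ->
  rho <= mu * sg.
Proof.
move=> r1 a0 aS L0 c20 HN H.
have S0 : 0 < S by apply: lt_le_trans aS; exact: powR_gt0.
have a20 : 0 < a ^+ 2 by rewrite exprn_gt0.
have mu0 : 0 <= mu by rewrite divr_ge0 ?mulr_ge0 ?powR_ge0 // ltW // mulr_gt0.
set K := (`|sg| + c2) / a ^+ 2.
have K0 : 0 <= K by rewrite divr_ge0 ?addr_ge0 // ltW.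
have k_small t : 0 < t -> t <= 1 -> `|k t| <= t * K by exact: rel_increment_le.
set t0 := Num.min 1 (1 / (2 * r * (K + 1))).
have t00 : 0 < t0 by rewrite lt_min ltr01 divr_gt0 // !mulr_gt0 //; lra.
suff : rho - mu * sg <= 0 by lra.
apply: (@ler0_mul_small _ _ (`|rho| * (r - 1) * K + mu * c2 / 2) _ t00).
  apply: addr_ge0; last by rewrite divr_ge0 // mulr_ge0.
  by apply: mulr_ge0 => //; apply: mulr_ge0 => //; lra.
move=> t t0' tt0; move: tt0; rewrite le_min => /andP[t1 tK].
have rk : r * `|k t| < 1.
  apply: le_lt_trans (ler_wpM2l (ltW (lt_le_trans ltr01 r1)) (k_small t t0' t1)) _.
  move: tK; rewrite ler_pdivlMr ?mul1r; last by rewrite !mulr_gt0 //; lra.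
  by nra.
have [Nt0 Nt2] := HN t t0'.
have step := root_powR_increment_bound _ _ _ r1 a0 aS L0 t0' Nt0 Nt2 rk (H t t0').
have rhok : (r - 1) * (rho * k t) <= (r - 1) * (`|rho| * (t * K)).
  apply: ler_wpM2l; first by rewrite subr_ge0.
  apply: le_trans (ler_norm _) _; rewrite normrM.
  by apply: ler_wpM2l => //; exact: k_small.
lra.
Qed.

End NonzeroEntrySlope.

Lemma cV_neq0_entry {V : nmodType} {m} {v : 'cV[V]_m} :
  v != 0 -> exists k, v k ord0 != 0.
Proof.
move=> vn0; case: (pickP (fun k => v k ord0 != 0)) => [k hk|h]; first by exists k.
case/eqP: vn0; apply/matrixP => i j; rewrite (ord1 j) !mxE.
by have := h i => /negbFE/eqP.
Qed.

Definition set_entry {T : Type} {m} (v : 'cV[T]_m) (j : 'I_m) (z : T) : 'cV[T]_m :=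
  \col_i (if i == j then z else v i ord0).

Lemma sum_set_entry {T : Type} {V : zmodType} {m} (v : 'cV[T]_m) j z
    (f : 'I_m -> T -> V) :
  \sum_i f i (set_entry v j z i ord0) = \sum_i f i (v i ord0) + (f j z - f j (v j ord0)).
Proof.
rewrite (bigD1 j) //= [in RHS](bigD1 j) //= !mxE eqxx.
rewrite (eq_bigr (fun i => f i (v i ord0))) => [|i /negbTE ij]; last by rewrite mxE ij.
by rewrite [RHS]addrC addrA subrK.
Qed.

(* F is R or C: [conj] is complex conjugation (the identity on R), [re] the real
   part and [emb] the inclusion of R into F. *)
Section ScalarField.
Context {R : realType} {F : fieldType}.
Variables (nrm : F -> R) (conj : {rmorphism F -> F}) (re : F -> R).
Variable emb : {rmorphism R -> F}.
Hypothesis conjK : involutive conj.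
Hypothesis conj_emb : forall t, conj (emb t) = emb t.
Hypothesis reD : forall x y, re (x + y) = re x + re y.
Hypothesis re_emb : forall t z, re (emb t * z) = t * re z.
Hypothesis re_conjC : forall x y, re (conj x * y) = re (conj y * x).
Hypothesis re_conj_le : forall x y, re (conj x * y) <= nrm x * nrm y.
Hypothesis nrm_sqr : forall z, nrm z ^+ 2 = re (conj z * z).
Hypothesis nrm_ge0 : forall z, 0 <= nrm z.
Hypothesis nrm_eq0 : forall z, nrm z = 0 -> z = 0.
Hypothesis nrm_embM : forall t z, nrm (emb t * z) = `|t| * nrm z.

Lemma re0 : re 0 = 0.
Proof. by apply: (addrI (re 0)); rewrite -reD !addr0. Qed.

Lemma reB x y : re (x - y) = re x - re y.
Proof. by apply/eqP; rewrite eq_sym subr_eq -reD subrK. Qed.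

Lemma re_sum (I : Type) (s : seq I) (P : pred I) (f : I -> F) :
  re (\sum_(i <- s | P i) f i) = \sum_(i <- s | P i) re (f i).
Proof. exact: (big_morph re reD re0). Qed.

Lemma nrm0 : nrm 0 = 0.
Proof. by have := nrm_embM 0 0; rewrite mulr0 normr0 mul0r. Qed.

Lemma nrm_gt0 z : (0 < nrm z) = (z != 0).
Proof.
rewrite lt_def nrm_ge0 andbT; apply/idP/idP; apply: contra => /eqP.
  by move->; rewrite nrm0.
by move/nrm_eq0 ->.
Qed.

Lemma nrm_sqr_le0 z : nrm z ^+ 2 <= 0 -> z = 0.
Proof. by move=> z2; apply/nrm_eq0/eqP; rewrite -sqrf_eq0 eq_le z2 sqr_ge0. Qed.

Lemma nrm_addZ_sqr x u t :
  nrm (x + emb t * u) ^+ 2 = nrm x ^+ 2 + 2 * t * re (conj x * u) + t ^+ 2 * nrm u ^+ 2.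
Proof.
rewrite !nrm_sqr rmorphD rmorphM conj_emb.
have -> : (conj x + emb t * conj u) * (x + emb t * u) = conj x * x + emb t * (conj x * u)
   + emb t * (conj u * x) + emb t * (emb t * (conj u * u)) by ring.
by rewrite !reD !re_emb (re_conjC u x); ring.
Qed.

Definition reip {m} (x y : 'cV[F]_m) : R := \sum_i re (conj (y i ord0) * x i ord0).

Lemma reip0l m (y : 'cV[F]_m) : reip 0 y = 0.
Proof. by rewrite /reip big1 // => i _; rewrite mxE mulr0 re0. Qed.

Lemma reip_self m (y : 'cV[F]_m) : reip y y = \sum_i nrm (y i ord0) ^+ 2.
Proof. by apply: eq_bigr => i _; rewrite nrm_sqr. Qed.

Lemma reip_mulmx_adj n m (A : 'M[F]_(n, m)) x v :
  reip (A *m x) (A *m v) = reip x ((adjmx conj A *m A) *m v).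
Proof.
rewrite /reip -!re_sum; congr re.
under [RHS]eq_bigr => i _.
  rewrite -mulmxA mxE rmorph_sum mulr_suml.
  under eq_bigr => r _ do rewrite /adjmx !mxE rmorphM conjK.
  over.
rewrite exchange_big /=; apply: eq_bigr => r _.
rewrite !mxE mulr_sumr; apply: eq_bigr => i _.
by rewrite mulrCA mulrA.
Qed.

Lemma reip_set_entry m (v w : 'cV[F]_m) j z :
  reip (set_entry v j z) w = reip v w + re (conj (w j ord0) * (z - v j ord0)).
Proof.
rewrite /reip (sum_set_entry v j z (fun i x => re (conj (w i ord0) * x))).
by rewrite -reB mulrBr.
Qed.

(* Hölder's inequality against y0, which is sharp because |y0| is constant on its
   support. *)
Lemma reip_mul_lpnorm_le {m} (q : \bar R) (y y0 : 'cV[F]_m) : (1 <= q)%E ->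
  y0 != 0 -> nonzero_equal_abs nrm y0 ->
  reip y y0 * lpnorm nrm q y0 <= lpnorm nrm q y * reip y0 y0.
Proof.
move=> q1 y0n0 y0eq; have [k y0k] := cV_neq0_entry y0n0.
set c := nrm (y0 k ord0); have c0 : 0 < c by rewrite nrm_gt0.
pose T := [pred i | y0 i ord0 != 0].
have y0c i : nrm (y0 i ord0) = c * (i \in T)%:R.
  rewrite inE; have [->|y0i] := eqVneq (y0 i ord0) 0; first by rewrite nrm0 mulr0.
  by rewrite mulr1; apply: y0eq.
have reip_le : reip y y0 <= c * \sum_(i in T) nrm (y i ord0).
  rewrite mulr_sumr big_mkcond; apply: ler_sum => i _.
  apply: le_trans (re_conj_le _ _) _; rewrite y0c.
  by case: (i \in T); rewrite ?mulr1 ?mulr0 ?mul0r.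
have self : reip y0 y0 = c ^+ 2 * #|T|%:R.
  rewrite reip_self -sumr_const mulr_sumr [RHS]big_mkcond; apply: eq_bigr => i _.
  by rewrite y0c; case: (i \in T); rewrite ?mulr1 ?mulr0 // expr2 mul0r.
have norm : lpnorm nrm q y0 = c * lp_of q (fun i => (i \in T)%:R).
  by rewrite /lpnorm (funext y0c) lp_ofZ // ltW.
have holder := sum_mul_lp_of_indicator_le _ T _ q1 (fun i => nrm_ge0 (y i ord0)).
rewrite self norm; apply: le_trans (ler_wpM2r (mulr_ge0 (ltW c0) _) reip_le) _.
  by apply: lp_of_ge0 => i; case: (i \in T).
set S := \sum_(i in T) _; set I := lp_of q _.
have -> : c * S * (c * I) = c ^+ 2 * (S * I) by ring.
have -> : lpnorm nrm q y * (c ^+ 2 * #|T|%:R) = c ^+ 2 * (#|T|%:R * lpnorm nrm q y).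
  by rewrite mulrC mulrA.
by apply: ler_wpM2l => //; exact: exprn_ge0 (ltW c0).
Qed.

Definition lp_subgradient (p : \bar R) (L : R) {m} (v w : 'cV[F]_m) : Prop :=
  (forall x, reip x w <= L * lpnorm nrm p x) /\ reip v w = L * lpnorm nrm p v.

Lemma lpnorm_gt0 {m} {p : \bar R} {x : 'cV[F]_m} : (1 <= p)%E -> x != 0 ->
  0 < lpnorm nrm p x.
Proof.
move=> p1 /cV_neq0_entry[k xk].
by apply: (lp_of_gt0 _ _ k p1) => [i|]; rewrite ?nrm_gt0.
Qed.

Lemma maximizer_lp_subgradient {n m} {A : 'M[F]_(n, m)} {p q : \bar R} {v} :
  (1 <= p)%E -> (1 <= q)%E -> is_maximizer nrm p q A v ->
  A *m v != 0 -> nonzero_equal_abs nrm (A *m v) ->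
  lp_subgradient p (reip (A *m v) (A *m v) / lpnorm nrm p v) v (adjmx conj A *m A *m v).
Proof.
move=> p1 q1 [vn0 vmax] Av0 Aveq.
have vp0 := lpnorm_gt0 p1 vn0; have Avq0 := lpnorm_gt0 q1 Av0.
set E := reip (A *m v) (A *m v).
have E0 : 0 <= E by rewrite /E reip_self sumr_ge0 // => i _; exact: sqr_ge0.
split; last by rewrite -reip_mulmx_adj divfK ?gt_eqF.
move=> x; rewrite -reip_mulmx_adj.
have [->|xn0] := eqVneq x 0.
  by rewrite mulmx0 reip0l mulr_ge0 ?divr_ge0 ?lp_of_ge0 // ltW.
rewrite -(ler_pM2r Avq0); apply: le_trans (reip_mul_lpnorm_le _ (A *m x) _ q1 Av0 Aveq) _.
have := vmax x xn0; rewrite ler_pdivrMr ?lpnorm_gt0 // => Axle.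
have -> : E / lpnorm nrm p v * lpnorm nrm p x * lpnorm nrm q (A *m v) =
          E * (lpnorm nrm q (A *m v) / lpnorm nrm p v * lpnorm nrm p x) by ring.
by rewrite mulrC; apply: ler_wpM2l.
Qed.

Lemma lp_subgradient_entry {m r L} {v w : 'cV[F]_m} j z : lp_subgradient r%:E L v w ->
  L * (\sum_i nrm (v i ord0) `^ r) `^ r^-1 + re (conj (w j ord0) * (z - v j ord0)) <=
  L * (\sum_i nrm (v i ord0) `^ r - nrm (v j ord0) `^ r + nrm z `^ r) `^ r^-1.
Proof.
move=> [sub eqv]; have := sub (set_entry v j z).
rewrite reip_set_entry eqv /lpnorm /= (sum_set_entry v j z (fun _ x => nrm x `^ r)).
by rewrite (addrC (nrm z `^ r)) addrA.
Qed.

Lemma lp_subgradient_zero_entry {m r L} {v w : 'cV[F]_m} {j} : 1 < r -> 0 <= L ->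
  v != 0 -> lp_subgradient r%:E L v w -> v j ord0 = 0 -> w j ord0 = 0.
Proof.
move=> r1 L0 vn0 sub vj0; apply: nrm_sqr_le0.
have [k vk] := cV_neq0_entry vn0.
have S0 : 0 < \sum_i nrm (v i ord0) `^ r.
  rewrite (bigD1 k) //= ltr_pwDl ?powR_gt0 ?nrm_gt0 //.
  by rewrite sumr_ge0 // => i _; exact: powR_ge0.
apply: (root_add_powR_slope_le0 _ _ _ _ _ r1 S0 L0 (nrm_ge0 (w j ord0))) => t t0.
have := lp_subgradient_entry j (emb t * w j ord0) sub.
rewrite vj0 subr0 nrm0 powR0 ?gt_eqF ?subr0 ?nrm_embM ?gtr0_norm //; last first.
  exact: lt_trans ltr01 r1.
by rewrite mulrCA re_emb -nrm_sqr.
Qed.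

Lemma lp_subgradient_nonzero_entry {m r L a S} {v w : 'cV[F]_m} {j} : 1 <= r -> 0 <= L ->
  lp_subgradient r%:E L v w -> \sum_i nrm (v i ord0) `^ r = S ->
  v j ord0 != 0 -> nrm (v j ord0) = a ->
  w j ord0 = emb (L * S `^ r^-1 * a `^ r / (S * a ^+ 2)) * v j ord0.
Proof.
move=> r1 L0 sub vS vj0 va.
set mu := L * S `^ r^-1 * a `^ r / (S * a ^+ 2); set u := w j ord0 - emb mu * v j ord0.
have a0 : 0 < a by rewrite -va nrm_gt0.
have aS : a `^ r <= S.
  rewrite -vS -va (bigD1 j) //= lerDl sumr_ge0 // => i _; exact: powR_ge0.
suff : nrm u ^+ 2 <= 0 by move/nrm_sqr_le0/eqP; rewrite subr_eq0 => /eqP.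
have slope := @root_powR_slope_le _ r a S L _ _ _ (fun t => nrm (v j ord0 + emb t * u))
  r1 a0 aS L0 (sqr_ge0 (nrm u)).
have uE : nrm u ^+ 2 = re (conj (w j ord0) * u) - mu * re (conj (v j ord0) * u).
  by rewrite nrm_sqr {1}/u rmorphB rmorphM conj_emb mulrBl reB -mulrA re_emb.
suff : re (conj (w j ord0) * u) <= mu * re (conj (v j ord0) * u) by lra.
apply: slope => t t0; first by rewrite nrm_ge0 nrm_addZ_sqr va.
have := lp_subgradient_entry j (v j ord0 + emb t * u) sub.
by rewrite vS va addrAC subrr add0r mulrCA re_emb.
Qed.

Lemma lp_subgradient_colinear {m r L} {v w : 'cV[F]_m} : 1 <= r -> 0 <= L ->
  v != 0 -> nonzero_equal_abs nrm v -> (1 < r \/ forall j, v j ord0 != 0) ->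
  lp_subgradient r%:E L v w -> exists mu, w = emb mu *: v.
Proof.
move=> r1 L0 vn0 veq supp sub; have [k vk] := cV_neq0_entry vn0.
set S := \sum_i nrm (v i ord0) `^ r; set a := nrm (v k ord0).
exists (L * S `^ r^-1 * a `^ r / (S * a ^+ 2)).
apply/matrixP => i j; rewrite (ord1 j) {j} mxE.
have [vi0|vi0] := eqVneq (v i ord0) 0.
  rewrite vi0 mulr0; apply: (lp_subgradient_zero_entry _ L0 vn0 sub vi0).
  by case: supp => // /(_ i); rewrite vi0 eqxx.
exact: (lp_subgradient_nonzero_entry r1 L0 sub erefl vi0 (veq _ _ vi0 vk)).
Qed.

Lemma lp_subgradient_inf_colinear {m L} {v w : 'cV[F]_m} : 0 <= L -> v != 0 ->
  inKm1 v -> lp_subgradient +oo%E L v w -> exists lam, w = lam *: v.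
Proof.
move=> L0 vn0 vKm1 [sub eqv]; have [k vk] := cV_neq0_entry vn0.
set a := nrm (v k ord0); have a0 : 0 < a by rewrite nrm_gt0.
have v_off i : i != k -> v i ord0 = 0.
  by move=> ik; apply/eqP; apply: contraNT ik => vi; apply/eqP/vKm1.
have v_le i : nrm (v i ord0) <= a.
  have [->|ik] := eqVneq i k; first exact: lexx.
  by rewrite v_off // nrm0 ltW.
have va : lpnorm nrm +oo%E v = a.
  by apply/le_anti; rewrite (le_bigmax _ (fun i => nrm (v i ord0)) k) andbT bigmax_le ?ltW.
have w_off i : i != k -> w i ord0 = 0.
  move=> ik; apply/eqP/negPn/negP => wi0.
  set b := nrm (w i ord0); have b0 : 0 < b by rewrite nrm_gt0.
  set x := set_entry v i (emb (a / b) * w i ord0).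
  have xa : lpnorm nrm +oo%E x <= a.
    apply: bigmax_le => [|i0 _]; first exact: ltW.
    rewrite mxE; case: eqP => // _.
    by rewrite nrm_embM gtr0_norm ?divr_gt0 // divfK ?gt_eqF.
  have := sub x; rewrite reip_set_entry eqv va v_off // subr0 mulrCA re_emb -nrm_sqr.
  have : L * lpnorm nrm +oo%E x <= L * a by apply: ler_wpM2l.
  have : 0 < a / b * b ^+ 2 by rewrite mulr_gt0 ?divr_gt0 ?exprn_gt0.
  rewrite -/b; lra.
exists (w k ord0 / v k ord0); apply/matrixP => i j; rewrite (ord1 j) {j} mxE.
have [->|ik] := eqVneq i k; first by rewrite mulfVK.
by rewrite (w_off _ ik) (v_off _ ik) mulr0.
Qed.

Theorem maximizer_eigenvector n m (A : 'M[F]_(n, m)) (p q : \bar R) (v : 'cV[F]_m) :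
  (1 <= p)%E -> (1 <= q)%E -> is_maximizer nrm p q A v ->
  nonzero_equal_abs nrm v -> nonzero_equal_abs nrm (A *m v) ->
  ((1 < p < +oo)%E \/ (p = 1%E /\ inK1 nrm v) \/ (p = +oo%E /\ inKm1 v)) ->
  eigenvector (adjmx conj A *m A) v.
Proof.
move=> p1 q1 vmax veq Aveq pcase; have [vn0 _] := vmax; split => //.
have [Av0|Avn0] := eqVneq (A *m v) 0.
  by exists 0; rewrite -mulmxA Av0 mulmx0 scale0r.
have sub := maximizer_lp_subgradient p1 q1 vmax Avn0 Aveq.
have L0 : 0 <= reip (A *m v) (A *m v) / lpnorm nrm p v.
  rewrite divr_ge0 ?lp_of_ge0 // reip_self sumr_ge0 // => i _; exact: sqr_ge0.
case: pcase => [/andP[p1r poo]|[[p_1 vK1]|[p_oo vKm1]]].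
- case: p p1 vmax sub L0 p1r poo => [r||] // _ _ sub L0; rewrite lte_fin => r1 _.
  have [mu ->] := lp_subgradient_colinear (ltW r1) L0 vn0 veq (or_introl r1) sub.
  by exists (emb mu).
- subst p; have [k vk] := cV_neq0_entry vn0.
  have supp j : v j ord0 != 0 by rewrite -nrm_gt0 (vK1 j k) nrm_gt0.
  have [mu ->] := lp_subgradient_colinear (lexx 1) L0 vn0 veq (or_intror supp) sub.
  by exists (emb mu).
- by subst p; exact: lp_subgradient_inf_colinear L0 vn0 vKm1 sub.
Qed.

End ScalarField.

Section ComplexModulus.
Context {R : realType}.
Implicit Types z : R[i].

Lemma Re_conjc_mul_le z w : complex.Re (conjc z * w) <= cmod z * cmod w.
Proof.
case: z => a1 a2; case: w => b1 b2; rewrite /cmod /= -sqrtrM ?addr_ge0 ?sqr_ge0 //.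
apply: le_trans (ler_norm _) _.
rewrite -sqrtr_sqr ler_sqrt ?mulr_ge0 ?addr_ge0 ?sqr_ge0 //.
by have := sqr_ge0 (a1 * b2 - a2 * b1); nra.
Qed.

Lemma cmod_sqr z : cmod z ^+ 2 = complex.Re (conjc z * z).
Proof. by case: z => a b; rewrite /cmod /= sqr_sqrtr ?addr_ge0 ?sqr_ge0 //; ring. Qed.

Lemma cmod_realM (t : R) z : cmod (real_complex R t * z) = `|t| * cmod z.
Proof.
case: z => a b; rewrite /cmod /=.
have -> : (t * a - 0 * b) ^+ 2 + (t * b + 0 * a) ^+ 2 = t ^+ 2 * (a ^+ 2 + b ^+ 2) by ring.
by rewrite sqrtrM ?sqr_ge0 // sqrtr_sqr.
Qed.

End ComplexModulus.

Theorem lemma3p1 (R : realType) :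
  (* case F = R *)
  (forall (n m : nat) (A : 'M[R]_(n, m)) (p q : \bar R) (v : 'cV[R]_m),
     (1 <= p)%E -> (1 <= q)%E ->
     is_maximizer (fun x : R => `|x|) p q A v ->
     nonzero_equal_abs (fun x : R => `|x|) v ->
     nonzero_equal_abs (fun x : R => `|x|) (A *m v) ->
     ((1 < p < +oo)%E \/ (p = 1%E /\ inK1 (fun x : R => `|x|) v)
        \/ (p = +oo%E /\ inKm1 v)) ->
     eigenvector (adjmx id A *m A) v)
  /\
  (* case F = C *)
  (forall (n m : nat) (A : 'M[R[i]]_(n, m)) (p q : \bar R) (v : 'cV[R[i]]_m),
     (1 <= p)%E -> (1 <= q)%E ->
     is_maximizer (@cmod R) p q A v ->
     nonzero_equal_abs (@cmod R) v ->
     nonzero_equal_abs (@cmod R) (A *m v) ->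
     ((1 < p < +oo)%E \/ (p = 1%E /\ inK1 (@cmod R) v)
        \/ (p = +oo%E /\ inKm1 v)) ->
     eigenvector (adjmx (@conjc R) A *m A) v).
Proof.
split.
- apply: (@maximizer_eigenvector R R (fun x : R => `|x|) idfun id idfun) => //.
  + by move=> x y; rewrite mulrC.
  + by move=> x y; rewrite -normrM ler_norm.
  + by move=> z; rewrite real_normK ?num_real.
  + by move=> z /normr0_eq0.
  + by move=> t z; rewrite normrM.
- apply: (@maximizer_eigenvector R R[i] (@cmod R) conjc (@complex.Re R) (real_complex R)).
  + exact: conjcK.
  + exact: conjc_real.
  + by case=> ? ?; case.
  + by move=> t; case=> a b /=; ring.
  + by case=> ? ?; case=> ? ? /=; ring.
  + exact: Re_conjc_mul_le.
  + exact: cmod_sqr.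
  + by case=> a b; apply: sqrtr_ge0.
  + exact: Normc.eq0_normc.
  + exact: cmod_realM.
Qed.
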